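(* Fix a sign $\varepsilon\in\{+1,-1\}$. There do not exist positive rational numbers $x_1,x_2,x_3,d_1,d_2,d_3$ satisfying $$x_1^2+x_2^2+x_3^2=1,\quad x_2^2+x_3^2=d_1^2,\quad x_3^2+x_1^2=d_2^2,\quad x_1^2+x_2^2=d_3^2$$ together with a rational number $c$ such that $$e_{[1,1]}=c,\qquad e_{[0,1]}=-c,\qquad e_{[1,0]}=\varepsilon c-1.$$ In other words, no rational perfect cuboid with unit space diagonal corresponds to the one-parameter families $E_{11}=c$, $E_{01}=-c$, $E_{10}=\pm c-1$ of rational solutions of the equation $(2E_{11})^2+(E_{01}^2+1-E_{10}^2)^2=8E_{01}^2$.
   Context: A rational perfect cuboid with unit space diagonal is a tuple of positive rationals $x_1,x_2,x_3$ (edges) and $d_1,d_2,d_3$ (face diagonals) satisfying $x_1^2+x_2^2+x_3^2=1$, $x_2^2+x_3^2=d_1^2$, $x_3^2+x_1^2=d_2^2$, $x_1^2+x_2^2=d_3^2$. (Integer perfect cuboids, i.e. cuboids with integer edges, integer face diagonals and integer space diagonal $L$, correspond to these after dividing by $L$.) The elementary multisymmetric polynomials used are $e_{[1,0]}=x_1+x_2+x_3$, $e_{[0,1]}=d_1+d_2+d_3$, and $e_{[1,1]}=x_1d_2+d_1x_2+x_2d_3+d_2x_3+x_3d_1+d_3x_1$. *)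

From HB Require Import structures.
From mathcomp Require Import all_boot all_order all_algebra.
Set Implicit Arguments. Unset Strict Implicit. Unset Printing Implicit Defensive.
Import Order.TTheory GRing.Theory Num.Theory.
Local Open Scope ring_scope.

Definition unit_perfect_cuboid (x1 x2 x3 d1 d2 d3 : rat) : Prop :=
  [/\ 0 < x1, 0 < x2 & 0 < x3] /\ [/\ 0 < d1, 0 < d2 & 0 < d3] /\
  [/\ x1 ^+ 2 + x2 ^+ 2 + x3 ^+ 2 = 1,
      x2 ^+ 2 + x3 ^+ 2 = d1 ^+ 2,
      x3 ^+ 2 + x1 ^+ 2 = d2 ^+ 2 &
      x1 ^+ 2 + x2 ^+ 2 = d3 ^+ 2].

Definition e10 (x1 x2 x3 : rat) : rat := x1 + x2 + x3.
Definition e01 (d1 d2 d3 : rat) : rat := d1 + d2 + d3.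
Definition e11 (x1 x2 x3 d1 d2 d3 : rat) : rat :=
  x1 * d2 + d1 * x2 + x2 * d3 + d2 * x3 + x3 * d1 + d3 * x1.

From HB Require Import structures.
From mathcomp Require Import all_boot all_order all_algebra.
Import Order.TTheory GRing.Theory Num.Theory.
Local Open Scope ring_scope.

(* The parametrisation E11 = c, E01 = -c forces the two
   multisymmetric functions e_[1,1] and e_[0,1] of a putative cuboid to be
   opposite to each other.  But every coordinate of a perfect cuboid is
   positive, so both e_[1,1] (a sum of products of positive numbers) and
   e_[0,1] (a sum of positive numbers) are positive, and two positive
   numbers in an ordered domain are never opposite.  Hence no cuboid lies on
   either family. *)

Lemma pos_neq_opp {R : numDomainType} {a b : R} :
  0 < a -> 0 < b -> b <> - a.
Proof.
move=> a_gt0 b_gt0 ba; move: b_gt0; rewrite ba oppr_gt0 => a_lt0.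
by move: (lt_trans a_gt0 a_lt0); rewrite ltxx.
Qed.

Lemma e11_gt0 {x1 x2 x3 d1 d2 d3 : rat} :
  [/\ 0 < x1, 0 < x2 & 0 < x3] -> [/\ 0 < d1, 0 < d2 & 0 < d3] ->
  0 < e11 x1 x2 x3 d1 d2 d3.
Proof. by move=> [? ? ?] [? ? ?]; rewrite /e11 !addr_gt0 ?mulr_gt0. Qed.

Lemma e01_gt0 {d1 d2 d3 : rat} :
  [/\ 0 < d1, 0 < d2 & 0 < d3] -> 0 < e01 d1 d2 d3.
Proof. by move=> [? ? ?]; rewrite /e01 !addr_gt0. Qed.

Lemma cuboid_e01_neq_opp_e11 {x1 x2 x3 d1 d2 d3 : rat} :
  unit_perfect_cuboid x1 x2 x3 d1 d2 d3 ->
  e01 d1 d2 d3 <> - e11 x1 x2 x3 d1 d2 d3.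
Proof.
move=> [x_gt0 [d_gt0 _]].
exact: (pos_neq_opp (e11_gt0 x_gt0 d_gt0) (e01_gt0 d_gt0)).
Qed.

Theorem theorem6p1 (eps : rat) (heps : eps = 1 \/ eps = -1) :
  ~ exists (x1 x2 x3 d1 d2 d3 c : rat),
      unit_perfect_cuboid x1 x2 x3 d1 d2 d3 /\
      e11 x1 x2 x3 d1 d2 d3 = c /\
      e01 d1 d2 d3 = - c /\
      e10 x1 x2 x3 = eps * c - 1.
Proof.
move=> [x1 [x2 [x3 [d1 [d2 [d3 [c [cuboid [e11_c [e01_c _]]]]]]]]]].
apply: (cuboid_e01_neq_opp_e11 cuboid).
by rewrite e01_c e11_c.
Qed.
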